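(* Let $\gamma>0$. The set $\mathcal{G}_\gamma$ has two path-connected components, namely $\mathcal{G}_\gamma^+=\{(X,Y,\hat A,\hat B,\hat C,\hat D,\Pi,\Xi)\in\mathcal{G}_\gamma:\det\Pi>0\}$ and $\mathcal{G}_\gamma^-=\{(X,Y,\hat A,\hat B,\hat C,\hat D,\Pi,\Xi)\in\mathcal{G}_\gamma:\det\Pi<0\}$.
   Context: Consider real matrices $A\in\mathbb{R}^{n_x\times n_x}$, $B_1\in\mathbb{R}^{n_x\times n_w}$, $B_2\in\mathbb{R}^{n_x\times n_u}$, $C_1\in\mathbb{R}^{n_z\times n_x}$, $C_2\in\mathbb{R}^{n_y\times n_x}$, $D_{11}\in\mathbb{R}^{n_z\times n_w}$, $D_{12}\in\mathbb{R}^{n_z\times n_u}$, $D_{21}\in\mathbb{R}^{n_y\times n_w}$ (the data of the plant $\dot x=Ax+B_1w+B_2u$, $z=C_1x+D_{11}w+D_{12}u$, $y=C_2x+D_{21}w$), with $(A,B_2)$ stabilizable and $(C_2,A)$ detectable. For $X,Y\in\mathbb{S}^{n_x}$, $\hat A\in\mathbb{R}^{n_x\times n_x}$, $\hat B\in\mathbb{R}^{n_x\times n_y}$, $\hat C\in\mathbb{R}^{n_u\times n_x}$, $\hat D\in\mathbb{R}^{n_u\times n_y}$, let $M_\gamma$ be the symmetric $4\times4$ block matrix with $M_{11}=AX+XA^T+B_2\hat C+(B_2\hat C)^T$, $M_{12}=\hat A^T+A+B_2\hat DC_2$, $M_{13}=B_1+B_2\hat DD_{21}$, $M_{14}=(C_1X+D_{12}\hat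 C)^T$, $M_{22}=A^TY+YA+\hat BC_2+(\hat BC_2)^T$, $M_{23}=YB_1+\hat BD_{21}$, $M_{24}=(C_1+D_{12}\hat DC_2)^T$, $M_{33}=-\gamma I$, $M_{34}=(D_{11}+D_{12}\hat DD_{21})^T$, $M_{44}=-\gamma I$. $\mathcal{F}_\gamma$ is the set of $(X,Y,\hat A,\hat B,\hat C,\hat D)$ with $\begin{bmatrix}X& I\\ I& Y\end{bmatrix}\succ0$ and $M_\gamma\prec0$; $\mathcal{G}_\gamma$ is the set of $(X,Y,\hat A,\hat B,\hat C,\hat D,\Pi,\Xi)$ with $(X,\dots,\hat D)\in\mathcal{F}_\gamma$, $\Pi,\Xi\in\mathbb{R}^{n_x\times n_x}$ and $\Xi\Pi=I-YX$.
   Formalization: The state dimension $n_x$ is taken to be positive, and $\mathcal{F}_\gamma$ is assumed nonempty. The statement above fails without it. *)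

From mathcomp Require Import all_boot all_order all_algebra.
From mathcomp Require Import all_classical all_reals all_analysis.
Set Implicit Arguments. Unset Strict Implicit. Unset Printing Implicit Defensive.
Import Order.TTheory GRing.Theory Num.Theory numFieldNormedType.Exports.
Local Open Scope classical_set_scope.
Local Open Scope ring_scope.

Section Defs.
Variable R : realType.

Definition posdef (n : nat) (M : 'M[R]_n) : Prop :=
  M^T = M /\ forall v : 'cV[R]_n, v != 0 -> 0 < (v^T *m M *m v) 0 0.

Definition negdef (n : nat) (M : 'M[R]_n) : Prop := posdef (- M).

(** Hurwitz: every (complex) eigenvalue a + i b of A has a < 0.
    A complex eigenvector u + i v (u, v real, not both zero) for the
    eigenvalue a + i b means A u = a u - b v and A v = b u + a v. *)
Definition hurwitz (n : nat) (A : 'M[R]_n) : Prop :=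
  forall (a b : R) (u v : 'cV[R]_n), (u != 0 \/ v != 0) ->
    A *m u = a *: u - b *: v -> A *m v = b *: u + a *: v -> a < 0.

Definition stabilizable (nx nu : nat) (A : 'M[R]_nx) (B : 'M[R]_(nx, nu)) : Prop :=
  exists K : 'M[R]_(nu, nx), hurwitz (A + B *m K).

Definition detectable (nx ny : nat) (C : 'M[R]_(ny, nx)) (A : 'M[R]_nx) : Prop :=
  exists L : 'M[R]_(nx, ny), hurwitz (A + L *m C).

Definition path_in (T : topologicalType) (S : set T) (p q : T) : Prop :=
  exists f : R -> T, {within `[0, 1], continuous f} /\ f 0 = p /\ f 1 = q /\
    (forall t : R, 0 <= t <= 1 -> S (f t)).

Definition path_component (T : topologicalType) (S : set T) (p : T) : set T :=
  [set q | S p /\ path_in S p q].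

Definition is_path_component (T : topologicalType) (S : set T) (C : set T) : Prop :=
  exists p, S p /\ C = path_component S p.

Section Plant.
Variables (nx nw nu nz ny : nat).
Variables (A : 'M[R]_nx) (B1 : 'M[R]_(nx, nw)) (B2 : 'M[R]_(nx, nu))
  (C1 : 'M[R]_(nz, nx)) (C2 : 'M[R]_(ny, nx)) (D11 : 'M[R]_(nz, nw))
  (D12 : 'M[R]_(nz, nu)) (D21 : 'M[R]_(ny, nw)).

Definition Mgamma (gamma : R) (X Y Ah : 'M[R]_nx) (Bh : 'M[R]_(nx, ny))
    (Ch : 'M[R]_(nu, nx)) (Dh : 'M[R]_(nu, ny)) :
    'M[R]_((nx + nx) + (nw + nz)) :=
  let M11 := A *m X + X *m A^T + B2 *m Ch + (B2 *m Ch)^T in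
  let M12 := Ah^T + A + B2 *m Dh *m C2 in
  let M13 := B1 + B2 *m Dh *m D21 in
  let M14 := (C1 *m X + D12 *m Ch)^T in
  let M22 := A^T *m Y + Y *m A + Bh *m C2 + (Bh *m C2)^T in
  let M23 := Y *m B1 + Bh *m D21 in
  let M24 := (C1 + D12 *m Dh *m C2)^T in
  let M33 := - (gamma%:M : 'M[R]_nw) in
  let M34 := (D11 + D12 *m Dh *m D21)^T in
  let M44 := - (gamma%:M : 'M[R]_nz) in
  let TR := block_mx M13 M14 M23 M24 in
  block_mx (block_mx M11 M12 M12^T M22) TR
           TR^T (block_mx M33 M34 M34^T M44).

Definition Fgamma (gamma : R) (X Y Ah : 'M[R]_nx) (Bh : 'M[R]_(nx, ny))
    (Ch : 'M[R]_(nu, nx)) (Dh : 'M[R]_(nu, ny)) : Prop :=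
  X^T = X /\ Y^T = Y /\
  posdef (block_mx X 1%:M 1%:M Y) /\ negdef (Mgamma gamma X Y Ah Bh Ch Dh).

(** Points (X, Y, Ah, Bh, Ch, Dh, Pi, Xi), as left-nested pairs. *)
Definition Gpoint : Type :=
  ('M[R]_nx * 'M[R]_nx * 'M[R]_nx * 'M[R]_(nx, ny) * 'M[R]_(nu, nx)
   * 'M[R]_(nu, ny) * 'M[R]_nx * 'M[R]_nx)%type.

Definition Ggamma (gamma : R) : set Gpoint :=
  [set p | let: (X, Y, Ah, Bh, Ch, Dh, Pi, Xi) := p in
     Fgamma gamma X Y Ah Bh Ch Dh /\ Xi *m Pi = 1%:M - Y *m X].

Definition Ggamma_plus (gamma : R) : set Gpoint :=
  [set p | Ggamma gamma p /\ 0 < \det p.1.2].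

Definition Ggamma_minus (gamma : R) : set Gpoint :=
  [set p | Ggamma gamma p /\ \det p.1.2 < 0].

End Plant.
End Defs.

(* The determinant of [Pi] never vanishes on G_gamma: [Xi Pi = 1 - Y X], and a
   vector in the left kernel of [1 - Y X] would give an isotropic vector of the
   positive definite matrix [[X, 1], [1, Y]]. By the intermediate value theorem
   the sign of [det Pi] is thus constant along paths in G_gamma.
   Conversely, F_gamma is convex, since M_gamma is affine in (X, Y, Ah, Bh, Ch, Dh)
   and positive definite matrices form a convex cone; and the invertible matrices
   with determinant of a given sign are path connected, by Gaussian elimination
   with transvections, each of which is joined to the identity. Two points of
   G_gamma with [det Pi] of the same sign are therefore joined by interpolating
   (X, Y, Ah, Bh, Ch, Dh) linearly, moving [Pi] along invertible matrices and
   setting [Xi = (1 - Y X) Pi^-1]. *)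

From mathcomp Require Import all_boot all_order all_algebra.
From mathcomp Require Import all_classical all_reals all_analysis.
From mathcomp Require Import lra.
Import Order.TTheory GRing.Theory Num.Theory numFieldNormedType.Exports.
Local Open Scope classical_set_scope.
Local Open Scope ring_scope.

Section MatrixContinuity.
Context {R : realType} {T : topologicalType}.

Lemma continuous_mx m n (f : T -> 'M[R]_(m, n)) :
  (forall i j, continuous (fun t => f t i j)) -> continuous f.
Proof.
move=> fc x A [P /= Pn PA].
have : \forall t \near x, forall i j, P i j (f t i j).
  by apply: filter_forall => i; apply: filter_forall => j; exact: fc (Pn i j).
by apply: filterS => t Pt; apply: PA.
Qed.

Lemma continuous_mxE {m n} {f : T -> 'M[R]_(m, n)} i j :
  continuous f -> continuous (fun t => f t i j).
Proof. by move=> fc x; exact: (continuous_comp (fc x) (@coord_continuous R m n i j (f x))). Qed.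

Lemma continuous_mulmx m n p (f : T -> 'M[R]_(m, n)) (g : T -> 'M[R]_(n, p)) :
  continuous f -> continuous g -> continuous (fun t => f t *m g t).
Proof.
move=> fc gc; apply: continuous_mx => i j; under eq_fun do rewrite mxE.
apply: (continuous_big add_continuous) => k _ x.
by apply: cvgM; [exact: (continuous_mxE i k fc x) | exact: (continuous_mxE k j gc x)].
Qed.

Lemma continuous_block_mx m1 m2 n1 n2 (a : T -> 'M[R]_(m1, n1))
    (b : T -> 'M[R]_(m1, n2)) (c : T -> 'M[R]_(m2, n1)) (d : T -> 'M[R]_(m2, n2)) :
  continuous a -> continuous b -> continuous c -> continuous d ->
  continuous (fun t => block_mx (a t) (b t) (c t) (d t)).
Proof.
move=> ac bc cc dc; apply: continuous_mx => i j.
rewrite -(splitK i) -(splitK j).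
case: (fintype.split i) => i'; case: (fintype.split j) => j' /=.
- by under eq_fun do rewrite block_mxEul; exact: continuous_mxE.
- by under eq_fun do rewrite block_mxEur; exact: continuous_mxE.
- by under eq_fun do rewrite block_mxEdl; exact: continuous_mxE.
- by under eq_fun do rewrite block_mxEdr; exact: continuous_mxE.
Qed.

Lemma continuous_det n (f : T -> 'M[R]_n) :
  continuous f -> continuous (fun t => \det (f t)).
Proof.
move=> fc; apply: (continuous_big add_continuous) => s _ x.
apply: cvgM; first exact: cvg_cst.
move: x; apply: (continuous_big mul_continuous) => i _.
exact: continuous_mxE.
Qed.

Lemma continuous_invmx n (f : T -> 'M[R]_n) :
  continuous f -> (forall t, \det (f t) != 0) -> continuous (fun t => invmx (f t)).
Proof.
move=> fc f_unit.
have -> : (fun t => invmx (f t)) = (fun t => (\det (f t))^-1 *: \adj (f t)).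
  by apply: funext => t; rewrite /invmx unitmxE unitfE f_unit.
move=> x; apply: cvgZ; first by apply: cvgV; [exact: f_unit | exact: continuous_det].
move: x; apply: continuous_mx => i j; under eq_fun do rewrite mxE /cofactor.
move=> x; apply: cvgM; first exact: cvg_cst.
move: x; apply: continuous_det; apply: continuous_mx => k l.
by under eq_fun do rewrite !mxE; exact: continuous_mxE.
Qed.

End MatrixContinuity.

Section InvertiblePaths.
Context {R : realType}.

Definition invertible_path {n} (P Q : 'M[R]_n) := exists h : R -> 'M[R]_n,
  [/\ continuous h, h 0 = P, h 1 = Q & forall t, \det (h t) != 0].

Definition clamp01 (t : R) : R := Num.min (Num.max t 0) 1.

Lemma continuous_clamp01 (T : topologicalType) (f : T -> R) :
  continuous f -> continuous (fun x => clamp01 (f x)).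
Proof.
move=> fc x; apply: (@continuous_min R T (fun x => Num.max (f x) 0) (fun=> 1) x).
  by apply: (@continuous_max R T f (fun=> 0) x); [exact: fc | exact: cvg_cst].
exact: cvg_cst.
Qed.

Lemma clamp01_le0 t : t <= 0 -> clamp01 t = 0.
Proof. by move=> t_le0; rewrite /clamp01 (max_idPr t_le0) (min_idPl ler01). Qed.

Lemma clamp01_ge1 t : 1 <= t -> clamp01 t = 1.
Proof. by move=> t_ge1; rewrite /clamp01 (max_idPl (le_trans ler01 t_ge1)) (min_idPr t_ge1). Qed.

Lemma invertible_path_sym {n} {P Q : 'M[R]_n} :
  invertible_path P Q -> invertible_path Q P.
Proof.
move=> [h [hc h0 h1 h_unit]]; exists (fun t => h (1 - t)); split => //.
- move=> x; apply: continuous_comp; last exact: hc.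
  by apply: cvgB; [exact: cvg_cst | exact: cvg_id].
- by rewrite subr0.
- by rewrite subrr.
Qed.

Lemma invertible_path_trans {n} {P} (Q : 'M[R]_n) {S} :
  invertible_path P Q -> invertible_path Q S -> invertible_path P S.
Proof.
move=> [g [gc g0 g1 g_unit]] [h [hc h0 h1 h_unit]].
exists (fun t => g (clamp01 (2 * t)) + h (clamp01 (2 * t - 1)) - Q); split.
- have c1 : continuous (fun t : R => clamp01 (2 * t)).
    by apply: continuous_clamp01; exact: mulrl_continuous.
  have c2 : continuous (fun t : R => clamp01 (2 * t - 1)).
    by apply: continuous_clamp01 => x; apply: cvgB; [exact: mulrl_continuous | exact: cvg_cst].
  move=> x; apply: cvgB; last exact: cvg_cst.
  by apply: cvgD; [exact: (continuous_comp (c1 x) (gc _)) | exact: (continuous_comp (c2 x) (hc _))].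
- by rewrite mulr0 sub0r clamp01_le0 // clamp01_le0 ?lerN10 // g0 h0 addrK.
- have two_sub1 : (2 : R) - 1 = 1 by lra.
  by rewrite mulr1 two_sub1 !clamp01_ge1 ?ler1n // g1 h1 addrC addKr.
- move=> t; have [t_le | t_gt] := leP (2 * t) 1.
    by rewrite (clamp01_le0 (2 * t - 1)) ?subr_le0 // h0 addrK.
  by rewrite (clamp01_ge1 (2 * t)) ?ltW // g1 addrC addKr.
Qed.

Lemma invertible_path_mull {n} {M P Q : 'M[R]_n} :
  \det M != 0 -> invertible_path P Q -> invertible_path (M *m P) (M *m Q).
Proof.
move=> M_unit [h [hc h0 h1 h_unit]]; exists (fun t => M *m h t); split.
- by apply: continuous_mulmx => //; exact: cst_continuous.
- by rewrite h0.
- by rewrite h1.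
- by move=> t; rewrite det_mulmx mulf_neq0.
Qed.

Lemma invertible_path_mulr {n} {M P Q : 'M[R]_n} :
  invertible_path P Q -> \det M != 0 -> invertible_path (P *m M) (Q *m M).
Proof.
move=> [h [hc h0 h1 h_unit]] M_unit; exists (fun t => h t *m M); split.
- by apply: continuous_mulmx => //; exact: cst_continuous.
- by rewrite h0.
- by rewrite h1.
- by move=> t; rewrite det_mulmx mulf_neq0.
Qed.

Lemma continuous_scaler {m n} (a : 'M[R]_(m, n)) : continuous (fun t : R => t *: a).
Proof. by move=> x; apply: cvgZ; [exact: cvg_id | exact: cvg_cst]. Qed.

Lemma invertible_path_ublock {m n} (b : 'M[R]_(m, n)) :
  invertible_path 1%:M (block_mx 1%:M b 0 1%:M).
Proof.
exists (fun t => block_mx 1%:M (t *: b) 0 1%:M); split.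
- by apply: continuous_block_mx; try exact: cst_continuous; exact: continuous_scaler.
- by rewrite scale0r -scalar_mx_block.
- by rewrite scale1r.
- by move=> t; rewrite det_ublock !det1 mulr1 oner_neq0.
Qed.

Lemma invertible_path_lblock {m n} (c : 'M[R]_(n, m)) :
  invertible_path 1%:M (block_mx 1%:M 0 c 1%:M).
Proof.
exists (fun t => block_mx 1%:M 0 (t *: c) 1%:M); split.
- by apply: continuous_block_mx; try exact: cst_continuous; exact: continuous_scaler.
- by rewrite scale0r -scalar_mx_block.
- by rewrite scale1r.
- by move=> t; rewrite det_lblock !det1 mulr1 oner_neq0.
Qed.

Lemma invertible_path_block_diag {m n} {S S' : 'M[R]_n} : invertible_path S S' ->
  invertible_path (block_mx (1%:M : 'M[R]_m) 0 0 S) (block_mx 1%:M 0 0 S').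
Proof.
move=> [h [hc h0 h1 h_unit]]; exists (fun t => block_mx 1%:M 0 0 (h t)); split.
- by apply: continuous_block_mx => //; exact: cst_continuous.
- by rewrite h0.
- by rewrite h1.
- by move=> t; rewrite det_ublock det1 mul1r.
Qed.

Lemma posdet_invertible_path_mx11 (A : 'M[R]_1) :
  0 < \det A -> invertible_path A 1%:M.
Proof.
(* Unlike the segment from [A] to [1], this path stays invertible for every real [t]. *)
move=> A_pos; exists (fun t => (1 - t) ^+ 2 *: A + t ^+ 2 *: 1%:M); split.
- move=> x; apply: cvgD; apply: cvgZ; try exact: cvg_cst.
    by apply: cvgM; apply: cvgB; try exact: cvg_id; exact: cvg_cst.
  by apply: cvgM; exact: cvg_id.
- by rewrite subr0 expr1n expr0n scale1r scale0r addr0.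
- by rewrite subrr expr0n expr1n scale0r add0r scale1r.
- move=> t; rewrite det_mx11 !mxE eqxx mulr1; rewrite det_mx11 in A_pos.
  have [->|t_neq0] := eqVneq t 0; first by rewrite subr0 expr0n expr1n mul1r addr0 gt_eqF.
  apply/lt0r_neq0/ltr_wpDl; first by rewrite mulr_ge0 ?sqr_ge0 ?ltW.
  by rewrite exprn_even_gt0.
Qed.

End InvertiblePaths.

Section PositiveDeterminant.
Context {R : realType} {n : nat}.
Hypothesis IH : forall B : 'M[R]_n, 0 < \det B -> invertible_path B 1%:M.

Lemma posdet_path_ulsubmx1 (A : 'M[R]_(1 + n)) :
  ulsubmx A = 1%:M -> 0 < \det A -> invertible_path A 1%:M.
Proof.
move=> ulA A_pos.
set b := ursubmx A; set c := dlsubmx A; set S := drsubmx A - c *m b.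
have eA : A = block_mx 1%:M b c (drsubmx A) by rewrite -ulA submxK.
have elim_c : block_mx 1%:M 0 (- c) 1%:M *m A = block_mx 1%:M b 0 S.
  by rewrite {1}eA mulmx_block !mul1mx !mul0mx !addr0 mulmx1 addNr mulNmx addrC.
have elim_b : block_mx 1%:M b 0 S *m block_mx 1%:M (- b) 0 1%:M = block_mx 1%:M 0 0 S.
  by rewrite mulmx_block !mul1mx !mul0mx !mulmx0 !mulmx1 !addr0 !add0r addNr.
have detS : \det S = \det A.
  by move/(congr1 determinant): elim_c; rewrite det_mulmx det_lblock det_ublock !det1 !mul1r.
have A_unit : \det A != 0 by rewrite gt_eqF.
apply: (invertible_path_trans (block_mx 1%:M b 0 S)).
  by have := invertible_path_mulr (invertible_path_lblock (- c)) A_unit; rewrite mul1mx elim_c.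
apply: (invertible_path_trans (block_mx 1%:M 0 0 S)).
  have cA_unit : \det (block_mx 1%:M b 0 S) != 0 by rewrite det_ublock det1 mul1r detS.
  by have := invertible_path_mull cA_unit (invertible_path_ublock (- b)); rewrite mulmx1 elim_b.
rewrite (scalar_mx_block 1 n 1).
by apply: invertible_path_block_diag; apply: IH; rewrite detS.
Qed.

Lemma posdet_path_dlsubmx_neq0 (A : 'M[R]_(1 + n)) k :
  dlsubmx A k 0 != 0 -> 0 < \det A -> invertible_path A 1%:M.
Proof.
move=> ck_neq0 A_pos.
(* Adding [b] times the lower rows to the first one turns the corner entry into [1]. *)
pose b : 'M[R]_(1, n) := ((1 - ulsubmx A 0 0) / dlsubmx A k 0) *: delta_mx 0 k.
have A_unit : \det A != 0 by rewrite gt_eqF.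
apply: (invertible_path_trans (block_mx 1%:M b 0 1%:M *m A)).
  by have := invertible_path_mulr (invertible_path_ublock b) A_unit; rewrite mul1mx.
apply: posdet_path_ulsubmx1; last by rewrite det_mulmx det_ublock !det1 !mul1r.
rewrite -[A in block_mx _ _ _ _ *m A]submxK mulmx_block block_mxKul mul1mx.
rewrite !mxE in ck_neq0.
apply/matrixP => i j; rewrite !ord1 /b -scalemxAl -rowE !mxE.
by rewrite divfK // addrC subrK.
Qed.

Lemma posdet_path_dlsubmx0 (A : 'M[R]_(1 + n)) (k : 'I_n) :
  dlsubmx A = 0 -> 0 < \det A -> invertible_path A 1%:M.
Proof.
(* [k] only witnesses [0 < n]: adding the first row to the others puts the
   nonzero corner entry into the first column below the corner. *)
move=> c0 A_pos.
have A_unit : \det A != 0 by rewrite gt_eqF.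
have a_neq0 : ulsubmx A 0 0 != 0.
  by move: A_unit; rewrite -[A in \det A]submxK c0 det_ublock det_mx11 mulf_eq0 negb_or => /andP[].
apply: (invertible_path_trans (block_mx 1%:M 0 (const_mx 1) 1%:M *m A)).
  by have := invertible_path_mulr (invertible_path_lblock (const_mx 1)) A_unit; rewrite mul1mx.
apply: (posdet_path_dlsubmx_neq0 _ k); last by rewrite det_mulmx det_lblock !det1 !mul1r.
rewrite -[A in block_mx _ _ _ _ *m A]submxK c0 mulmx_block mul1mx mul0mx mulmx0 !addr0 block_mxKdl.
by move: a_neq0; rewrite !mxE big_ord1 !mxE mul1r.
Qed.

End PositiveDeterminant.

Section GeneralLinearGroup.
Context {R : realType}.

Lemma posdet_invertible_path {n} {A : 'M[R]_n.+1} :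
  0 < \det A -> invertible_path A 1%:M.
Proof.
elim: n A => [|n IH] A A_pos; first exact: posdet_invertible_path_mx11.
have [[k ck_neq0] | c_eq0] := pselect (exists k, dlsubmx (A : 'M[R]_(1 + n.+1)) k 0 != 0).
  exact: posdet_path_dlsubmx_neq0 IH _ k ck_neq0 A_pos.
apply: (posdet_path_dlsubmx0 IH _ ord0 _ A_pos); apply/matrixP => i j.
rewrite ord1 [RHS]mxE; apply/eqP; apply: contra_notT c_eq0 => ci_neq0; by exists i.
Qed.

Definition flip_mx n : 'M[R]_n := diag_mx (\row_(i < n) if i == 0 :> nat then -1 else 1).

Lemma flip_mxK n : flip_mx n *m flip_mx n = 1%:M.
Proof.
rewrite mulmx_diag -diag_const_mx; congr diag_mx; apply/matrixP => i j.
by rewrite !mxE; case: ifP; rewrite ?mulrNN mulr1.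
Qed.

Lemma det_flip_mx n : (0 < n)%N -> \det (flip_mx n) = -1.
Proof.
case: n => // n _; rewrite det_diag big_ord_recl !mxE /=.
by rewrite big1 ?mulr1 // => i _; rewrite !mxE.
Qed.

Lemma negdet_invertible_path {n} {A : 'M[R]_n.+1} :
  \det A < 0 -> invertible_path A (flip_mx n.+1).
Proof.
move=> A_neg.
have flip_unit : \det (flip_mx n.+1) != 0 by rewrite det_flip_mx // oppr_eq0 oner_eq0.
have : invertible_path (flip_mx n.+1 *m A) 1%:M.
  by apply: posdet_invertible_path; rewrite det_mulmx det_flip_mx // mulN1r oppr_gt0.
by move/(invertible_path_mull flip_unit); rewrite mulmxA flip_mxK mul1mx mulmx1.
Qed.

Lemma same_sign_invertible_path {n} {P Q : 'M[R]_n} :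
  (0 < n)%N -> 0 < \det P * \det Q -> invertible_path P Q.
Proof.
case: n P Q => // n P Q _ PQ_pos.
have [P_neg | P_pos | P0] := ltgtP (\det P) 0; last by rewrite P0 mul0r ltxx in PQ_pos.
  have Q_neg : \det Q < 0 by rewrite -(nmulr_rgt0 _ P_neg).
  exact: invertible_path_trans _ (negdet_invertible_path P_neg)
    (invertible_path_sym (negdet_invertible_path Q_neg)).
have Q_pos : 0 < \det Q by rewrite -(pmulr_rgt0 _ P_pos).
exact: invertible_path_trans _ (posdet_invertible_path P_pos)
  (invertible_path_sym (posdet_invertible_path Q_pos)).
Qed.

End GeneralLinearGroup.

Section Interpolation.
Context {R : realType}.

Definition lerp {V : lmodType R} (t : R) (a b : V) : V := (1 - t) *: a + t *: b.

Lemma lerp0 {V : lmodType R} (a b : V) : lerp 0 a b = a.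
Proof. by rewrite /lerp subr0 scale1r scale0r addr0. Qed.

Lemma lerp1 {V : lmodType R} (a b : V) : lerp 1 a b = b.
Proof. by rewrite /lerp subrr scale0r add0r scale1r. Qed.

Lemma lerpxx {V : lmodType R} t (a : V) : lerp t a a = a.
Proof. by rewrite /lerp -scalerDl subrK scale1r. Qed.

Lemma lerpD {V : lmodType R} t (a b c d : V) :
  lerp t (a + c) (b + d) = lerp t a b + lerp t c d.
Proof. by rewrite /lerp !scalerDr addrACA. Qed.

Lemma lerpN {V : lmodType R} t (a b : V) : lerp t (- a) (- b) = - lerp t a b.
Proof. by rewrite /lerp !scalerN opprD. Qed.

Lemma lerp_mulmxl m n p t (K : 'M[R]_(m, n)) (a b : 'M[R]_(n, p)) :
  lerp t (K *m a) (K *m b) = K *m lerp t a b.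
Proof. by rewrite /lerp mulmxDr !scalemxAr. Qed.

Lemma lerp_mulmxr m n p t (K : 'M[R]_(n, p)) (a b : 'M[R]_(m, n)) :
  lerp t (a *m K) (b *m K) = lerp t a b *m K.
Proof. by rewrite /lerp mulmxDl !scalemxAl. Qed.

Lemma lerp_trmx m n t (a b : 'M[R]_(m, n)) : lerp t a^T b^T = (lerp t a b)^T.
Proof. by rewrite /lerp linearD !linearZ. Qed.

Lemma lerp_block_mx m1 m2 n1 n2 t (a a' : 'M[R]_(m1, n1)) (b b' : 'M[R]_(m1, n2))
    (c c' : 'M[R]_(m2, n1)) (d d' : 'M[R]_(m2, n2)) :
  lerp t (block_mx a b c d) (block_mx a' b' c' d') =
    block_mx (lerp t a a') (lerp t b b') (lerp t c c') (lerp t d d').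
Proof. by rewrite /lerp !scale_block_mx add_block_mx. Qed.

Lemma continuous_lerp {V : normedModType R} (a b : V) : continuous (fun t => lerp t a b).
Proof.
move=> x; apply: cvgD; apply: cvgZ; try exact: cvg_cst; last exact: cvg_id.
by apply: cvgB; [exact: cvg_cst | exact: cvg_id].
Qed.

Lemma posdef_lerp n t (M0 M1 : 'M[R]_n) :
  0 <= t <= 1 -> posdef M0 -> posdef M1 -> posdef (lerp t M0 M1).
Proof.
move=> /andP[t_ge0 t_le1] [M0_sym M0_pos] [M1_sym M1_pos]; split.
  by rewrite -lerp_trmx M0_sym M1_sym.
move=> v v_neq0; rewrite /lerp mulmxDr mulmxDl -!scalemxAr -!scalemxAl.
have := M0_pos v v_neq0; have := M1_pos v v_neq0.
set q0 := v^T *m M0 *m v; set q1 := v^T *m M1 *m v; rewrite !mxE; nra.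
Qed.

Lemma negdef_lerp n t (M0 M1 : 'M[R]_n) :
  0 <= t <= 1 -> negdef M0 -> negdef M1 -> negdef (lerp t M0 M1).
Proof. by move=> t01 M0_neg M1_neg; rewrite /negdef -lerpN; exact: posdef_lerp. Qed.

End Interpolation.

Lemma path_in_end {R : realType} {T : topologicalType} {S : set T} {p q : T} :
  path_in R S p q -> S q.
Proof. by move=> [f [_ [_ [<- f_in]]]]; apply: f_in; rewrite ler01 lexx. Qed.

Lemma posdef_block1_det_neq0 {R : realType} {n} {X Y : 'M[R]_n} :
  posdef (block_mx X 1%:M 1%:M Y) -> \det (1%:M - Y *m X) != 0.
Proof.
move=> [_ XY_pos]; apply/negP => /det0P [v v_neq0 vYX].
have vYX_v : v *m Y *m X = v.
  by move/eqP: vYX; rewrite mulmxBr mulmx1 subr_eq0 mulmxA => /eqP <-.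
pose u := col_mx (v *m Y)^T (- v^T).
have u_neq0 : u != 0.
  by apply: contra v_neq0; rewrite /u col_mx_eq0 oppr_eq0 !trmx_eq0 => /andP[].
have := XY_pos u u_neq0.
rewrite tr_col_mx linearN /= !trmxK mul_row_block !mulmx1 mulNmx vYX_v !subrr.
by rewrite row_mx0 mul0mx mxE ltxx.
Qed.

Lemma mulr_le0_min_max {R : realDomainType} (a b : R) :
  a * b <= 0 -> Num.min a b <= 0 <= Num.max a b.
Proof.
move=> ab_le0; rewrite ge_min le_max; apply/andP; split; apply/orP.
- by case: (leP a 0) => ?; [left | right; nra].
- by case: (leP 0 a) => ?; [left | right; nra].
Qed.

Lemma continuous_pair {T U V : topologicalType} (f : T -> U) (g : T -> V) :
  continuous f -> continuous g -> continuous (fun x => (f x, g x)).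
Proof. by move=> fc gc x; apply: cvg_pair; [exact: fc | exact: gc]. Qed.

Lemma continuous_det_Pi {R : realType} {nx nu ny : nat} :
  continuous (fun p : Gpoint R nx nu ny => \det p.1.2).
Proof.
apply: continuous_det => p; apply: (continuous_comp (f := fst)); first exact: cvg_fst.
exact: cvg_snd.
Qed.

Section Plant.
Context {R : realType} {nx nw nu nz ny : nat}.
Context {A : 'M[R]_nx} {B1 : 'M[R]_(nx, nw)} {B2 : 'M[R]_(nx, nu)}
  {C1 : 'M[R]_(nz, nx)} {C2 : 'M[R]_(ny, nx)} {D11 : 'M[R]_(nz, nw)}
  {D12 : 'M[R]_(nz, nu)} {D21 : 'M[R]_(ny, nw)} {gamma : R}.

Lemma Mgamma_lerp t (X0 Y0 Ah0 X1 Y1 Ah1 : 'M[R]_nx) (Bh0 Bh1 : 'M[R]_(nx, ny))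
    (Ch0 Ch1 : 'M[R]_(nu, nx)) (Dh0 Dh1 : 'M[R]_(nu, ny)) :
  Mgamma A B1 B2 C1 C2 D11 D12 D21 gamma (lerp t X0 X1) (lerp t Y0 Y1)
    (lerp t Ah0 Ah1) (lerp t Bh0 Bh1) (lerp t Ch0 Ch1) (lerp t Dh0 Dh1) =
  lerp t (Mgamma A B1 B2 C1 C2 D11 D12 D21 gamma X0 Y0 Ah0 Bh0 Ch0 Dh0)
         (Mgamma A B1 B2 C1 C2 D11 D12 D21 gamma X1 Y1 Ah1 Bh1 Ch1 Dh1).
Proof.
rewrite /Mgamma /=.
by rewrite !(lerp_block_mx, lerpD, lerpN, lerp_trmx, lerp_mulmxl, lerp_mulmxr, lerpxx).
Qed.

Local Notation F := (Fgamma A B1 B2 C1 C2 D11 D12 D21 gamma).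
Local Notation G := (Ggamma A B1 B2 C1 C2 D11 D12 D21 gamma).

Lemma Fgamma_lerp t (X0 Y0 Ah0 X1 Y1 Ah1 : 'M[R]_nx) (Bh0 Bh1 : 'M[R]_(nx, ny))
    (Ch0 Ch1 : 'M[R]_(nu, nx)) (Dh0 Dh1 : 'M[R]_(nu, ny)) :
  0 <= t <= 1 -> F X0 Y0 Ah0 Bh0 Ch0 Dh0 -> F X1 Y1 Ah1 Bh1 Ch1 Dh1 ->
  F (lerp t X0 X1) (lerp t Y0 Y1) (lerp t Ah0 Ah1) (lerp t Bh0 Bh1)
    (lerp t Ch0 Ch1) (lerp t Dh0 Dh1).
Proof.
move=> t01 [X0_sym [Y0_sym [XY0_pos M0_neg]]] [X1_sym [Y1_sym [XY1_pos M1_neg]]].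
split; first by rewrite -lerp_trmx X0_sym X1_sym.
split; first by rewrite -lerp_trmx Y0_sym Y1_sym.
split; last by rewrite Mgamma_lerp; exact: negdef_lerp.
have -> : block_mx (lerp t X0 X1) 1%:M 1%:M (lerp t Y0 Y1) =
    lerp t (block_mx X0 1%:M 1%:M Y0) (block_mx X1 1%:M 1%:M Y1).
  by rewrite lerp_block_mx !lerpxx.
exact: posdef_lerp.
Qed.

Lemma Ggamma_det_Pi_neq0 {p} : G p -> \det p.1.2 != 0.
Proof.
case: p => [[[[[[[X Y] Ah] Bh] Ch] Dh] Pi] Xi] /= [[_ [_ [XY_pos _]]] XiPi].
by have := posdef_block1_det_neq0 XY_pos; rewrite -XiPi det_mulmx mulf_eq0 negb_or => /andP[].
Qed.

Lemma Ggamma_path p0 p1 : (0 < nx)%N -> G p0 -> G p1 ->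
  0 < \det p0.1.2 * \det p1.1.2 -> path_in R G p0 p1.
Proof.
move=> nx_gt0 Gp0 Gp1 /(same_sign_invertible_path nx_gt0) [h [hc h0 h1 h_unit]].
have Pi0_unit := Ggamma_det_Pi_neq0 Gp0; have Pi1_unit := Ggamma_det_Pi_neq0 Gp1.
move: Gp0 Gp1 h0 h1 Pi0_unit Pi1_unit.
case: p0 => [[[[[[[X0 Y0] Ah0] Bh0] Ch0] Dh0] Pi0] Xi0].
case: p1 => [[[[[[[X1 Y1] Ah1] Bh1] Ch1] Dh1] Pi1] Xi1] /=.
move=> [F0 XiPi0] [F1 XiPi1] h0 h1 Pi0_unit Pi1_unit.
pose Xi t := (1%:M - lerp t Y0 Y1 *m lerp t X0 X1) *m invmx (h t).
have Xi_cont : continuous Xi.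
  apply: (@continuous_mulmx R R); last exact: continuous_invmx.
  have YX_cont := @continuous_mulmx R R _ _ _ _ _ (continuous_lerp Y0 Y1) (continuous_lerp X0 X1).
  by move=> x; apply: cvgB; [exact: cvg_cst | exact: YX_cont].
exists (fun t => (lerp t X0 X1, lerp t Y0 Y1, lerp t Ah0 Ah1, lerp t Bh0 Bh1,
  lerp t Ch0 Ch1, lerp t Dh0 Dh1, h t, Xi t)).
split.
  by apply: continuous_subspaceT; do ?apply: continuous_pair => //; exact: continuous_lerp.
have unitmx_det (M : 'M[R]_nx) : \det M != 0 -> M \in unitmx by rewrite unitmxE unitfE.
rewrite /Xi !lerp0 !lerp1 h0 h1 -XiPi0 -XiPi1.
rewrite (mulmxK (unitmx_det _ Pi0_unit)) (mulmxK (unitmx_det _ Pi1_unit)).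
split; first by []; split; first by [].
move=> t t01; split; first exact: Fgamma_lerp.
by rewrite mulmxKV ?unitmx_det.
Qed.

Lemma path_in_Ggamma_det_Pi p q : path_in R G p q -> 0 < \det p.1.2 * \det q.1.2.
Proof.
move=> [f [fc [<- [<- f_in]]]]; rewrite ltNge; apply/negP => /mulr_le0_min_max.
have det_f_cont : {within `[0, 1], continuous (fun t => \det (f t).1.2)}.
  by move=> x; exact: continuous_comp (fc x) (continuous_det_Pi _).
move=> /(IVT ler01 det_f_cont) [c]; rewrite in_itv /= => c01 det_c0.
by have := Ggamma_det_Pi_neq0 (f_in c c01); rewrite det_c0 eqxx.
Qed.

Lemma path_component_Ggamma p : (0 < nx)%N -> G p ->
  path_component R G p = [set q | G q /\ 0 < \det p.1.2 * \det q.1.2].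
Proof.
move=> nx_gt0 Gp; apply/seteqP; split => q /=.
  by move=> [_ pq]; split; [exact: path_in_end pq | exact: path_in_Ggamma_det_Pi].
by move=> [Gq pq_pos]; split => //; exact: Ggamma_path.
Qed.

Lemma path_component_Ggamma_plus p : (0 < nx)%N ->
  Ggamma_plus A B1 B2 C1 C2 D11 D12 D21 gamma p ->
  path_component R G p = Ggamma_plus A B1 B2 C1 C2 D11 D12 D21 gamma.
Proof.
move=> nx_gt0 [Gp p_pos]; rewrite path_component_Ggamma //.
by apply: eq_set => q; rewrite pmulr_rgt0.
Qed.

Lemma path_component_Ggamma_minus p : (0 < nx)%N ->
  Ggamma_minus A B1 B2 C1 C2 D11 D12 D21 gamma p ->
  path_component R G p = Ggamma_minus A B1 B2 C1 C2 D11 D12 D21 gamma.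
Proof.
move=> nx_gt0 [Gp p_neg]; rewrite path_component_Ggamma //.
by apply: eq_set => q; rewrite nmulr_rgt0.
Qed.

End Plant.

Theorem proposition2 (R : realType) (nx nw nu nz ny : nat)
  (A : 'M[R]_nx) (B1 : 'M[R]_(nx, nw)) (B2 : 'M[R]_(nx, nu))
  (C1 : 'M[R]_(nz, nx)) (C2 : 'M[R]_(ny, nx)) (D11 : 'M[R]_(nz, nw))
  (D12 : 'M[R]_(nz, nu)) (D21 : 'M[R]_(ny, nw)) (gamma : R) :
  (0 < nx)%N ->
  stabilizable A B2 -> detectable C2 A ->
  0 < gamma ->
  (exists (X Y Ah : 'M[R]_nx) (Bh : 'M[R]_(nx, ny)) (Ch : 'M[R]_(nu, nx))
     (Dh : 'M[R]_(nu, ny)),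
     Fgamma A B1 B2 C1 C2 D11 D12 D21 gamma X Y Ah Bh Ch Dh) ->
  forall C : set (Gpoint R nx nu ny),
    @is_path_component R _ (Ggamma A B1 B2 C1 C2 D11 D12 D21 gamma) C <->
    (C = Ggamma_plus A B1 B2 C1 C2 D11 D12 D21 gamma \/
     C = Ggamma_minus A B1 B2 C1 C2 D11 D12 D21 gamma).
Proof.
move=> nx_gt0 _ _ _ [X [Y [Ah [Bh [Ch [Dh FXY]]]]]] C.
pose p_plus : Gpoint R nx nu ny := (X, Y, Ah, Bh, Ch, Dh, 1%:M, 1%:M - Y *m X).
pose p_minus : Gpoint R nx nu ny :=
  (X, Y, Ah, Bh, Ch, Dh, flip_mx nx, (1%:M - Y *m X) *m flip_mx nx).
have Gplus_p : Ggamma_plus A B1 B2 C1 C2 D11 D12 D21 gamma p_plus.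
  by split; [split; last rewrite mulmx1 | rewrite /= det1 ltr01].
have Gminus_p : Ggamma_minus A B1 B2 C1 C2 D11 D12 D21 gamma p_minus.
  by split; [split; last rewrite -mulmxA flip_mxK mulmx1 | rewrite /= det_flip_mx // ltrN10].
split.
  move=> [p [Gp ->]]; move: (Ggamma_det_Pi_neq0 Gp); rewrite neq_lt => /orP[p_neg | p_pos].
    by right; exact: path_component_Ggamma_minus.
  by left; exact: path_component_Ggamma_plus.
move=> [-> | ->].
  by exists p_plus; split; [exact: Gplus_p.1 | rewrite path_component_Ggamma_plus].
by exists p_minus; split; [exact: Gminus_p.1 | rewrite path_component_Ggamma_minus].
Qed.
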